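(* Let $M$ be a closed manifold and $\phi\in A^1(\mathbb{R}^2,M)$. Then any two dense orbits of $\phi$ are homeomorphic (indeed their isotropy groups coincide).
   Context: $A^1(\mathbb{R}^2,M)$ is the set of actions $\phi:\mathbb{R}^2\times M\to M$ of $\mathbb{R}^2$ on $M$ with $C^1$ infinitesimal generators. The orbit of $p$ is $\mathcal{O}_p=\{\phi(\omega,p):\omega\in\mathbb{R}^2\}$, equipped with the topology making $\omega\mapsto\phi(\omega,p)$ induce a homeomorphism $\mathbb{R}^2/G_p\to\mathcal{O}_p$, where $G_p=\{\omega\in\mathbb{R}^2:\phi(\omega,p)=p\}$ is the isotropy group of $p$. An orbit is dense if it is dense in $M$. *)

From HB Require Import structures.
From mathcomp Require Import all_boot all_order all_algebra.
From mathcomp Require Import all_classical all_reals all_analysis.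
From mathcomp Require Import Rstruct Rstruct_topology.
From Stdlib Require Import Rdefinitions.

Set Implicit Arguments.
Unset Strict Implicit.
Unset Printing Implicit Defensive.
Import Order.TTheory GRing.Theory Num.Theory.
Import numFieldNormedType.Exports.
Local Open Scope classical_set_scope.
Local Open Scope ring_scope.

Definition basis_vec (n : nat) (i : 'I_n) : 'rV[R]_n := delta_mx 0 i.

Fixpoint Ck (n m : nat) (k : nat) (U : set 'rV[R]_n)
    (f : 'rV[R]_n -> 'rV[R]_m) : Prop :=
  match k with
  | 0 => {in U, continuous f}
  | k'.+1 => (forall (j : 'I_n) (x : 'rV[R]_n), U x -> derivable f x (basis_vec j))
             /\ (forall j : 'I_n, Ck k' U (fun x => 'D_(basis_vec j) f x))
  end.

Definition smooth_on (n m : nat) (U : set 'rV[R]_n) (f : 'rV[R]_n -> 'rV[R]_m) :=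
  forall k, Ck k U f.

Record chart (M : topologicalType) (n : nat) := Chart {
  cdom : set M;
  cmap : M -> 'rV[R]_n;
  cinv : 'rV[R]_n -> M;
  cdom_open : open cdom;
  cimg_open : open (cmap @` cdom);
  cmap_cont : {within cdom, continuous cmap};
  cinv_cont : {within cmap @` cdom, continuous cinv};
  cinv_map : forall x, cdom x -> cinv (cmap x) = x;
}.

Record smooth_atlas (M : topologicalType) (n : nat) := SmoothAtlas {
  atlas : set (chart M n);
  atlas_cover : forall x : M, exists c, atlas c /\ cdom c x;
  atlas_compat : forall c d, atlas c -> atlas d ->
    smooth_on (cmap c @` (cdom c `&` cdom d)) (cmap d \o cinv c);
}.

(* A closed manifold: compact Hausdorff space with a smooth atlas
   (charts onto open subsets of R^n, so no boundary). *)
Definition closed_manifold (M : topologicalType) (n : nat) (A : smooth_atlas M n) :=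
  hausdorff_space M /\ compact [set: M].

Definition R2_action (M : topologicalType) (phi : 'rV[R]_2 -> M -> M) :=
  continuous (fun z : 'rV[R]_2 * M => phi z.1 z.2)
  /\ (forall p, phi 0 p = p)
  /\ (forall a b p, phi (a + b) p = phi a (phi b p)).

(* Local representative, in the chart c, of the i-th infinitesimal generator
   X_i(p) = d/dt phi(t e_i, p) |_{t=0}. *)
Definition gen_local (M : topologicalType) (n : nat) (phi : 'rV[R]_2 -> M -> M)
    (i : 'I_2) (c : chart M n) (y : 'rV[R]_n) : 'rV[R]_n :=
  'D_1 (fun t : R^o => cmap c (phi (t *: basis_vec i) (cinv c y))) 0.

Definition A1 (M : topologicalType) (n : nat) (A : smooth_atlas M n)
    (phi : 'rV[R]_2 -> M -> M) :=
  R2_action phi /\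
  forall (i : 'I_2) (c : chart M n), atlas A c ->
    (forall p, cdom c p ->
       derivable (fun t : R^o => cmap c (phi (t *: basis_vec i) p)) 0 1)
    /\ Ck 1 (cmap c @` cdom c) (gen_local phi i c).

Definition orbit (M : topologicalType) (phi : 'rV[R]_2 -> M -> M) (p : M) : set M :=
  [set phi w p | w in [set: 'rV[R]_2]].

Definition isotropy (M : topologicalType) (phi : 'rV[R]_2 -> M -> M) (p : M)
  : set 'rV[R]_2 := [set w | phi w p = p].

Definition dense_orbit (M : topologicalType) (phi : 'rV[R]_2 -> M -> M) (p : M) :=
  closure (orbit phi p) = [set: M].

From Pilot Require Import Defs.
From mathcomp Require Import all_boot all_order all_algebra.
From mathcomp Require Import all_classical all_reals all_analysis.
From mathcomp Require Import Rstruct Rstruct_topology.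
From Stdlib Require Import Rdefinitions.

(* Since R^2 is abelian, an element w of the isotropy group of p fixes every
   point phi v p of the orbit of p.  If that orbit is dense, the continuous
   map phi w, which agrees with the identity on a dense set of the Hausdorff
   space M, is the identity. *)

Set Implicit Arguments.
Unset Strict Implicit.
Unset Printing Implicit Defensive.
Import GRing.Theory.
Local Open Scope classical_set_scope.
Local Open Scope ring_scope.

Lemma eq_on_closure (T U : topologicalType) (f g : T -> U) (D : set T) :
  hausdorff_space U -> continuous f -> continuous g ->
  (forall x, D x -> f x = g x) -> forall x, closure D x -> f x = g x.
Proof.
move=> hU cf cg eqD x clDx; apply: hU => A B Afx Bgx.
have nbhs_pre : nbhs x (f @^-1` A `&` g @^-1` B).
  by apply: filterI; [exact: cf | exact: cg].
have [y [Dy [Afy Bgy]]] := clDx _ nbhs_pre.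
by exists (f y); split; rewrite // eqD.
Qed.

Definition action_kernel (M : topologicalType) (phi : 'rV[R]_2 -> M -> M)
  : set 'rV[R]_2 := [set w | forall x, phi w x = x].

Section R2_action.
Variables (M : topologicalType) (phi : 'rV[R]_2 -> M -> M).
Hypothesis act : R2_action phi.

Lemma R2_action_continuous (w : 'rV[R]_2) : continuous (phi w).
Proof.
case: act => cphi _ x.
have to_pair : (w, y) @[y --> x] --> (w, x).
  by apply: (@cvg_pair _ _ _ _ (nbhs w)); [exact: cvg_cst | exact: cvg_id].
exact: cvg_comp to_pair (cphi (w, x)).
Qed.

Lemma R2_actionC (v w : 'rV[R]_2) (x : M) : phi v (phi w x) = phi w (phi v x).
Proof. by case: act => _ [_ phiD]; rewrite -!phiD addrC. Qed.

Lemma isotropy_fixes_orbit (p : M) (w : 'rV[R]_2) :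
  isotropy phi p w -> forall x, Defs.orbit phi p x -> phi w x = x.
Proof. by move=> wp _ [v _ <-]; rewrite R2_actionC wp. Qed.

Lemma isotropy_dense_orbit (p : M) :
  hausdorff_space M -> dense_orbit phi p -> isotropy phi p = action_kernel phi.
Proof.
move=> hM dense_p; apply/seteqP; split => w wp; last exact: (wp p).
have id_continuous : continuous (@id M) by move=> ?; exact: cvg_id.
move=> x; apply: (eq_on_closure hM (@R2_action_continuous w) id_continuous).
- exact: isotropy_fixes_orbit wp.
- by rewrite dense_p.
Qed.

End R2_action.

Theorem mainTheorem3 (M : topologicalType) (n : nat) (A : smooth_atlas M n)
  (phi : 'rV[R]_2 -> M -> M) :
  closed_manifold A -> A1 A phi ->
  forall p q : M, dense_orbit phi p -> dense_orbit phi q ->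
  isotropy phi p = isotropy phi q.
Proof.
move=> [hM _] [act _] p q dense_p dense_q.
by rewrite !isotropy_dense_orbit.
Qed.
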